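(* Let $k\ge2$, $N_2=m\ge1$, $N_1=n+1-mk\ge0$, $\eta\in\mathbb C$ with $\hbar=k\eta$, $t=e^{\eta/2}$, $q=e^{\hbar/2}$ (so $q=t^k$). Let $S_0=\bigsqcup_{\ell=1}^{N_2}S_\ell$ with $S_\ell=\{e_{N_1+k(\ell-1)+j}-e_{N_1+k(\ell-1)+j+1}: j=1,\dots,k-1\}$, so $\mathcal D_0=\{x\in V: x_j-x_{j+1}=\eta$ whenever $e_j-e_{j+1}\in S_0\}$, and use the coordinates $x_1,\dots,x_{N_1}$ and $y_\ell=\frac1k\sum_{s=0}^{k-1}x_{N_1+k\ell-s}-\frac{k-1}2\eta$ ($\ell=1,\dots,N_2$) on $\mathcal D_0$ (so $x_{N_1+k\ell-s}=y_\ell+s\eta$ there). Then the restriction of $$M=\sum_{i=1}^{n+1}\prod_{j\ne i}\frac{te^{x_j-x_i}-t^{-1}}{e^{x_j-x_i}-1}\,\mathsf T^\hbar_{x_i}$$ to $\mathcal D_0$ is well defined and equals $$\overline M=\sum_{i=1}^{N_1}\prod_{j=1,j\ne i}^{N_1}\frac{te^{x_j-x_i}-t^{-1}}{e^{x_j-x_i}-1}\prod_{\ell'=1}^{N_2}\frac{qe^{y_{\ell'}-x_i}-q^{-1}}{e^{y_{\ell'}-x_i}-1}\,\mathsf T^\hbar_{x_i}+\frac{q-q^{-1}}{t-t^{-1}}\sum_{\ell=1}^{N_2}\prod_{j=1}^{N_1}\frac{te^{x_j-y_\ell}-t^{-1}}{e^{x_j-y_\ell}-1}\prod_{\ell'\ne\ell}\frac{qe^{y_{\ell'}-y_\ell}-q^{-1}}{e^{y_{\ell'}-y_\ell}-1}\,\mathsf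 T^\eta_{y_\ell}.$$
   Context: $R=A_n=\{e_i-e_j:i\ne j\}$ realized in $V=\{x=\sum_{i=1}^{n+1}x_ie_i\in\mathbb C^{n+1}:\sum x_i=0\}$, $\{e_i\}$ orthonormal. Functions on $V$ are regarded as functions of $x_1,\dots,x_{n+1}$ invariant under simultaneous shift of all variables; $\mathsf T^a_z$ denotes the shift $z\mapsto z+a$ in the variable $z$, so $\mathsf T^\hbar_{x_i}=\tau(-\hat e_i)$ where $\hat e_i$ is the orthogonal projection of $e_i$ onto $V$ and $(\tau(\lambda)f)(x)=f(x-\hbar\lambda)$. $\hbar\in\mathbb C\setminus\pi i\mathbb Q$. For $S_0$ a set of simple roots, $\overline V=\{x\in V:(\alpha,x)=0\ \forall\alpha\in S_0\}$ and $\bar\lambda$ the orthogonal projection onto $\overline V$. The restriction of a difference operator $D=\sum_\lambda g_\lambda\tau(\lambda)$ to $\mathcal D_0$ is $\overline D=\sum_{\lambda'}\big(\sum_{\bar\lambda=\lambda'}g_\lambda\big)\big|_{\mathcal D_0}\tau(\lambda')$, provided each such restricted coefficient is a well-defined meromorphic function on $\mathcal D_0$. *)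

From Stdlib Require Import Reals List Arith ZArith ClassicalEpsilon.
Open Scope R_scope.

Record Cx := mkC { Cre : R ; Cim : R }.
Definition CofR (a : R) : Cx := mkC a 0.
Definition C0 : Cx := CofR 0.
Definition C1 : Cx := CofR 1.
Definition Cadd (z w : Cx) : Cx := mkC (Cre z + Cre w) (Cim z + Cim w).
Definition Copp (z : Cx) : Cx := mkC (- Cre z) (- Cim z).
Definition Csub (z w : Cx) : Cx := Cadd z (Copp w).
Definition Cmul (z w : Cx) : Cx :=
  mkC (Cre z * Cre w - Cim z * Cim w) (Cre z * Cim w + Cim z * Cre w).
Definition Cinv (z : Cx) : Cx :=
  let d := Cre z * Cre z + Cim z * Cim z in mkC (Cre z / d) (- Cim z / d).
Definition Cdiv (z w : Cx) : Cx := Cmul z (Cinv w).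
Definition Cexp (z : Cx) : Cx := mkC (exp (Cre z) * cos (Cim z)) (exp (Cre z) * sin (Cim z)).

Definition rng (lo hi : nat) : list nat := List.seq lo (S hi - lo).
Definition sumC (lo hi : nat) (f : nat -> Cx) : Cx :=
  fold_right (fun i acc => Cadd (f i) acc) C0 (rng lo hi).
Definition prodC (lo hi : nat) (f : nat -> Cx) : Cx :=
  fold_right (fun i acc => Cmul (f i) acc) C1 (rng lo hi).
Definition sumR (lo hi : nat) (f : nat -> R) : R :=
  fold_right (fun i acc => f i + acc) 0 (rng lo hi).

Definition not_in_piiQ (h : Cx) : Prop :=
  forall (p : Z) (r : positive), h <> mkC 0 (PI * IZR p / IZR (Zpos r)).

(** * The setting. Points of Cx^{n+1} and real vectors are functions of the
    coordinate index 1..n+1 (other indices are irrelevant). N2 = m blocks of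
    size k, N1 = n+1-m*k. *)
Section Setting.
Variables (n m k : nat) (eta : Cx).

Definition N1 : nat := S n - m * k.
Definition N2 : nat := m.
Definition hbar : Cx := Cmul (CofR (INR k)) eta.
Definition tt : Cx := Cexp (Cmul (CofR (/2)) eta).
Definition qq : Cx := Cexp (Cmul (CofR (/2)) hbar).

(** j is such that e_j - e_{j+1} is in S_0 *)
Definition inS0 (j : nat) : Prop :=
  exists l, (1 <= l <= N2)%nat /\
  exists j', (1 <= j' <= k - 1)%nat /\ j = (N1 + k * (l - 1) + j')%nat.

Definition vec := nat -> R.
Definition dot (v w : vec) : R := sumR 1 (S n) (fun i => v i * w i).
Definition inV (v : vec) : Prop := sumR 1 (S n) v = 0.
Definition inVbar (v : vec) : Prop := inV v /\ forall j, inS0 j -> v j = v (S j).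
Definition is_orth_proj (P : vec -> Prop) (v w : vec) : Prop :=
  P w /\ forall u, P u -> dot (fun i => v i - w i) u = 0.
Definition veq (v w : vec) : Prop := forall i, (1 <= i <= S n)%nat -> v i = w i.

(** ehat_i = orthogonal projection of e_i onto V *)
Definition ehat (i : nat) : vec :=
  fun j => (if Nat.eqb j i then 1 else 0) - / INR (S n).
(** vector of T^hbar_{x_i} : tau(- ehat_i) *)
Definition lamx (i : nat) : vec := fun j => - ehat i j.
(** vector of T^eta_{y_l} (shift by eta of all x in block l, i.e. of y_l):
    tau(lambda) with lambda = -(1/k) * projection onto V of sum_{block l} e_j *)
Definition inblock (l j : nat) : bool :=
  Nat.leb (N1 + k * (l - 1) + 1) j && Nat.leb j (N1 + k * l).
Definition lamy (l : nat) : vec :=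
  fun j => - / INR k * (if inblock l j then 1 else 0) + / INR (S n).

Definition coefT := (nat -> Cx) -> Cx.
Definition diffop := list (vec * coefT).
Definition dec (P : Prop) : bool :=
  if excluded_middle_informative P then true else false.
Definition coef (D : diffop) (lam' : vec) : coefT := fun x =>
  fold_right (fun e acc => Cadd (if dec (veq (fst e) lam') then snd e x else C0) acc)
    C0 D.
(** coefficient of tau(lam') in the restriction of D to D_0 : sum of g_lam over
    lam with bar(lam) = lam', evaluated at points x of D_0 *)
Definition rcoef (D : diffop) (lam' : vec) : coefT := fun x =>
  fold_right (fun e acc =>
      Cadd (if dec (is_orth_proj inVbar (fst e) lam') then snd e x else C0) acc)
    C0 D.

Definition inVC (x : nat -> Cx) : Prop := sumC 1 (S n) x = C0.
Definition inD0 (x : nat -> Cx) : Prop :=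
  inVC x /\ forall j, inS0 j -> Csub (x j) (x (S j)) = eta.
(** generic points: all coefficients of M have nonvanishing denominators *)
Definition generic (x : nat -> Cx) : Prop :=
  forall i j, (1 <= i <= S n)%nat -> (1 <= j <= S n)%nat -> i <> j ->
    Cexp (Csub (x j) (x i)) <> C1.

Definition ycoord (x : nat -> Cx) (l : nat) : Cx :=
  Csub (Cmul (CofR (/ INR k)) (sumC 0 (k - 1) (fun s => x (N1 + k * l - s)%nat)))
       (Cmul (CofR ((INR k - 1) / 2)) eta).

Definition fct (p a b : Cx) : Cx :=
  Cdiv (Csub (Cmul p (Cexp (Csub a b))) (Cinv p)) (Csub (Cexp (Csub a b)) C1).

Definition Mcoef (i : nat) : coefT := fun x =>
  prodC 1 (S n) (fun j => if Nat.eqb j i then C1 else fct tt (x j) (x i)).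
Definition Mop : diffop := map (fun i => (lamx i, Mcoef i)) (rng 1 (S n)).

Definition Mbx (i : nat) : coefT := fun x =>
  Cmul (prodC 1 N1 (fun j => if Nat.eqb j i then C1 else fct tt (x j) (x i)))
       (prodC 1 N2 (fun l' => fct qq (ycoord x l') (x i))).
Definition Mby (l : nat) : coefT := fun x =>
  Cmul (Cdiv (Csub qq (Cinv qq)) (Csub tt (Cinv tt)))
   (Cmul (prodC 1 N1 (fun j => fct tt (x j) (ycoord x l)))
         (prodC 1 N2 (fun l' => if Nat.eqb l' l then C1
                                else fct qq (ycoord x l') (ycoord x l)))).
Definition Mbar : diffop :=
  map (fun i => (lamx i, Mbx i)) (rng 1 N1) ++
  map (fun l => (lamy l, Mby l)) (rng 1 N2).

End Setting.

(* On D0 the coordinates of the l-th block are x = y_l + (k-1) eta, ..., y_l + eta, y_l,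
   in decreasing index order.  Projected onto Vbar, the shift T^hbar_{x_i} of a free index is
   unchanged, while that of any index of the l-th block becomes T^eta_{y_l}; so the restricted
   coefficient of T^eta_{y_l} is the sum of the coefficients of M over the block.  For every
   index i of a block except the last one, the factor j = i+1 of its coefficient is
   (t e^(-eta) - t^-1) / (e^(-eta) - 1) = 0.  In the remaining coefficients the t-factors over a
   block telescope, because z_j = e^(x_j - c) satisfies z_j = t^2 z_(j+1): their product is the
   single q-factor at y_l (q = t^k), and over the block of the index itself it is
   (q - q^-1) / (t - t^-1). *)

From Pilot Require Import Defs.
From Stdlib Require Import Reals List Arith ZArith Lia Lra Field Ring Psatz ClassicalEpsilon.
Import Pilot.Defs. (* Reals also defines a [C1] *)
Open Scope R_scope.

Lemma Cx_ext (a b c d : R) : a = c -> b = d -> mkC a b = mkC c d.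
Proof. now intros -> ->. Qed.

Lemma C_ring_theory : ring_theory C0 C1 Cadd Cmul Csub Copp (@eq Cx).
Proof.
  split; intros; repeat match goal with z : Cx |- _ => destruct z end;
    unfold Cadd, Cmul, Csub, Copp, C0, C1, CofR; simpl; try reflexivity;
    apply Cx_ext; ring.
Qed.

Lemma Cinv_l (z : Cx) : z <> C0 -> Cmul (Cinv z) z = C1.
Proof.
  destruct z as [a b]; intro Hz; unfold Cmul, Cinv, C1, CofR; simpl.
  assert (Hd : a * a + b * b <> 0).
  { intro Hd. apply Hz. unfold C0, CofR.
    assert (a = 0) by nra. assert (b = 0) by nra. now subst. }
  apply Cx_ext; field; exact Hd.
Qed.

Lemma C1_neq_C0 : C1 <> C0.
Proof. unfold C1, C0, CofR; intro H; injection H; lra. Qed.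

Lemma C_field_theory : field_theory C0 C1 Cadd Cmul Csub Copp Cdiv Cinv (@eq Cx).
Proof. split; [exact C_ring_theory | exact C1_neq_C0 | reflexivity | exact Cinv_l]. Qed.

Add Field C_field : C_field_theory.

Lemma Cexp_add (a b : Cx) : Cexp (Cadd a b) = Cmul (Cexp a) (Cexp b).
Proof.
  destruct a as [a1 a2], b as [b1 b2]; unfold Cexp, Cadd, Cmul; simpl.
  rewrite exp_plus, cos_plus, sin_plus. apply Cx_ext; ring.
Qed.

Lemma Cexp_C0 : Cexp C0 = C1.
Proof.
  unfold Cexp, C0, C1, CofR; simpl. rewrite exp_0, cos_0, sin_0.
  apply Cx_ext; ring.
Qed.

Lemma Cexp_neq0 (a : Cx) : Cexp a <> C0.
Proof.
  destruct a as [a1 a2]; unfold Cexp, C0, CofR; simpl; intro H; injection H; intros Hs Hc.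
  pose proof (exp_pos a1). pose proof (sin2_cos2 a2). unfold Rsqr in *.
  assert (cos a2 = 0) by (apply (Rmult_eq_reg_l (exp a1)); lra).
  assert (sin a2 = 0) by (apply (Rmult_eq_reg_l (exp a1)); lra).
  nra.
Qed.

Lemma Cmul_neq0 (a b : Cx) : a <> C0 -> b <> C0 -> Cmul a b <> C0.
Proof.
  intros Ha Hb H. apply Hb.
  replace b with (Cmul (Cinv a) (Cmul a b)) by (field; exact Ha).
  rewrite H. ring.
Qed.

Lemma Csub_C1_neq0 (z : Cx) : z <> C1 -> Csub z C1 <> C0.
Proof.
  intros Hz H. apply Hz.
  replace z with (Cadd (Csub z C1) C1) by ring. rewrite H; ring.
Qed.

Lemma Csub_Cinv_neq0 t : t <> C0 -> Cmul t t <> C1 -> Csub t (Cinv t) <> C0.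
Proof.
  intros Ht Htt E. apply Htt.
  replace (Cmul t t) with (Cadd C1 (Cmul t (Csub t (Cinv t)))) by (field; exact Ht).
  rewrite E; ring.
Qed.

Fixpoint Cpow (t : Cx) (p : nat) : Cx :=
  match p with O => C1 | S p => Cmul t (Cpow t p) end.

Lemma Cpow_neq0 (t : Cx) (p : nat) : t <> C0 -> Cpow t p <> C0.
Proof.
  intro Ht; induction p as [|p IH]; simpl.
  - exact C1_neq_C0.
  - now apply Cmul_neq0.
Qed.

Definition Csum (L : list nat) (f : nat -> Cx) : Cx :=
  fold_right (fun i acc => Cadd (f i) acc) C0 L.

Definition Cprod (L : list nat) (f : nat -> Cx) : Cx :=
  fold_right (fun i acc => Cmul (f i) acc) C1 L.

Definition Rsum (L : list nat) (f : nat -> R) : R :=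
  fold_right (fun i acc => f i + acc) 0 L.

Lemma Csum_app L1 L2 f : Csum (L1 ++ L2) f = Cadd (Csum L1 f) (Csum L2 f).
Proof. induction L1 as [|i L1 IH]; simpl; [ring | rewrite IH; ring]. Qed.

Lemma Cprod_app L1 L2 f : Cprod (L1 ++ L2) f = Cmul (Cprod L1 f) (Cprod L2 f).
Proof. induction L1 as [|i L1 IH]; simpl; [ring | rewrite IH; ring]. Qed.

Lemma Rsum_app L1 L2 f : Rsum (L1 ++ L2) f = Rsum L1 f + Rsum L2 f.
Proof. induction L1 as [|i L1 IH]; simpl; [ring | rewrite IH; ring]. Qed.

Lemma Csum_ext L f g : (forall i, In i L -> f i = g i) -> Csum L f = Csum L g.
Proof. induction L as [|i L IH]; simpl; intros H; auto. rewrite H, IH; auto. Qed.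

Lemma Cprod_ext L f g : (forall i, In i L -> f i = g i) -> Cprod L f = Cprod L g.
Proof. induction L as [|i L IH]; simpl; intros H; auto. rewrite H, IH; auto. Qed.

Lemma Rsum_ext L f g : (forall i, In i L -> f i = g i) -> Rsum L f = Rsum L g.
Proof. induction L as [|i L IH]; simpl; intros H; auto. rewrite H, IH; auto. Qed.

Lemma Csum_flat_map (g : nat -> list nat) L f :
  Csum (flat_map g L) f = Csum L (fun l => Csum (g l) f).
Proof. induction L as [|l L IH]; simpl; [reflexivity | now rewrite Csum_app, IH]. Qed.

Lemma Cprod_flat_map (g : nat -> list nat) L f :
  Cprod (flat_map g L) f = Cprod L (fun l => Cprod (g l) f).
Proof. induction L as [|l L IH]; simpl; [reflexivity | now rewrite Cprod_app, IH]. Qed.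

Lemma Csum_C0 L : Csum L (fun _ => C0) = C0.
Proof. induction L as [|i L IH]; simpl; [reflexivity | rewrite IH; ring]. Qed.

Lemma Cprod_eq0 L f j : In j L -> f j = C0 -> Cprod L f = C0.
Proof.
  induction L as [|i L IH]; simpl; intros Hj Hf; [destruct Hj|].
  destruct Hj as [<-|Hj]; [rewrite Hf | rewrite IH]; auto; ring.
Qed.

Lemma Cprod_pull L l c h : In l L -> NoDup L ->
  Cprod L (fun j => if Nat.eqb j l then c else h j) =
  Cmul c (Cprod L (fun j => if Nat.eqb j l then C1 else h j)).
Proof.
  induction L as [|i L IH]; simpl; intros Hl Hd; [destruct Hl|]. inversion Hd; subst.
  destruct (Nat.eqb_spec i l) as [<-|Hne].
  - rewrite (Cprod_ext L _ h), (Cprod_ext L (fun j => if Nat.eqb j i then C1 else h j) h);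
      [ring | |]; intros j Hj; destruct (Nat.eqb_spec j i); congruence.
  - destruct Hl as [Hl|Hl]; [contradiction|]. rewrite IH; auto; ring.
Qed.

Lemma Rsum_plus L f g : Rsum L (fun i => f i + g i) = Rsum L f + Rsum L g.
Proof. induction L as [|i L IH]; simpl; [ring | rewrite IH; ring]. Qed.

Lemma Rsum_minus L f g : Rsum L (fun i => f i - g i) = Rsum L f - Rsum L g.
Proof. induction L as [|i L IH]; simpl; [ring | rewrite IH; ring]. Qed.

Lemma Rsum_scal L c f : Rsum L (fun i => c * f i) = c * Rsum L f.
Proof. induction L as [|i L IH]; simpl; [ring | rewrite IH; ring]. Qed.

Lemma Rsum_const L c : Rsum L (fun _ => c) = INR (length L) * c.
Proof.
  induction L as [|i L IH]; [simpl; ring|].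
  change (c + Rsum L (fun _ => c) = INR (S (length L)) * c). rewrite IH, S_INR; ring.
Qed.

Lemma Rsum_nonneg L f : (forall i, In i L -> 0 <= f i) -> 0 <= Rsum L f.
Proof.
  induction L as [|i L IH]; simpl; intros H; [lra|].
  assert (0 <= f i) by auto. assert (0 <= Rsum L f) by auto. lra.
Qed.

Lemma Rsum_eq0_nonneg L f : (forall i, In i L -> 0 <= f i) -> Rsum L f = 0 ->
  forall i, In i L -> f i = 0.
Proof.
  induction L as [|j L IH]; simpl; intros Hf Hs i Hi; [destruct Hi|].
  assert (0 <= f j) by auto. assert (0 <= Rsum L f) by (apply Rsum_nonneg; auto).
  destruct Hi as [<-|Hi]; [lra|]. apply IH; auto. lra.
Qed.

Lemma Rsum_delta L i f : In i L -> NoDup L ->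
  Rsum L (fun j => (if Nat.eqb j i then 1 else 0) * f j) = f i.
Proof.
  induction L as [|j L IH]; simpl; intros Hi Hd; [destruct Hi|]. inversion Hd; subst.
  destruct (Nat.eqb_spec j i) as [<-|Hne].
  - rewrite (Rsum_ext L _ (fun _ => 0)), Rsum_const; [ring|].
    intros l Hl. destruct (Nat.eqb_spec l j); [congruence | ring].
  - destruct Hi as [Hi|Hi]; [contradiction|]. rewrite IH; auto; ring.
Qed.

Lemma Csum_arith X e p : Csum (seq 0 p) (fun s => Cadd X (Cmul (CofR (INR s)) e)) =
  Cadd (Cmul (CofR (INR p)) X) (Cmul (CofR (INR p * (INR p - 1) / 2)) e).
Proof.
  induction p as [|p IH].
  - destruct X, e; unfold Csum, Cadd, Cmul, CofR, C0; simpl; apply Cx_ext; field.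
  - rewrite seq_S, Csum_app, IH, S_INR. simpl.
    destruct X, e; unfold Cadd, Cmul, CofR, C0; simpl; apply Cx_ext; field.
Qed.

Lemma seq_blocks k m c d :
  seq c (m * k) = flat_map (fun l => seq (c + k * (l - d)) k) (seq d m).
Proof.
  revert c d; induction m as [|m IH]; intros c d; [reflexivity|].
  change (S m * k)%nat with (k + m * k)%nat. rewrite seq_app, (IH (c + k)%nat (S d)).
  cbn [seq flat_map]. rewrite Nat.sub_diag, Nat.mul_0_r, Nat.add_0_r. f_equal.
  rewrite !flat_map_concat_map. f_equal. apply map_ext_in. intros l Hl. apply in_seq in Hl. f_equal.
  replace (l - d)%nat with (S (l - S d)) by lia. rewrite Nat.mul_succ_r. lia.
Qed.

Lemma rng_1 hi : rng 1 hi = seq 1 hi.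
Proof. unfold rng. f_equal. lia. Qed.

Lemma rng_NoDup lo hi : NoDup (rng lo hi).
Proof. apply seq_NoDup. Qed.

Lemma length_rng hi : length (rng 1 hi) = hi.
Proof. unfold rng. rewrite length_seq. lia. Qed.

Lemma sumR_Rsum lo hi f : sumR lo hi f = Rsum (rng lo hi) f.
Proof. reflexivity. Qed.

Lemma sumC_Csum lo hi f : sumC lo hi f = Csum (rng lo hi) f.
Proof. reflexivity. Qed.

Lemma prodC_Cprod lo hi f : prodC lo hi f = Cprod (rng lo hi) f.
Proof. reflexivity. Qed.

(** * The factors of M and their telescoping products *)

Definition mfactor (t z : Cx) : Cx := Cdiv (Csub (Cmul t z) (Cinv t)) (Csub z C1).

Lemma fct_mfactor (t a b : Cx) : fct t a b = mfactor t (Cexp (Csub a b)).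
Proof. reflexivity. Qed.

Lemma mfactor_telescope t z a p : t <> C0 ->
  (forall j, (a <= j < a + p)%nat -> z j = Cmul (Cmul t t) (z (S j))) ->
  (forall j, (a <= j <= a + p)%nat -> z j <> C1) ->
  Cprod (seq a (S p)) (fun j => mfactor t (z j)) = mfactor (Cpow t (S p)) (z (a + p)%nat).
Proof.
  intros Ht. induction p as [|p IH]; intros Hz Hz1.
  - rewrite Nat.add_0_r. unfold mfactor. cbn. replace (Cmul t C1) with t by ring. ring.
  - rewrite seq_S, Cprod_app, IH.
    2: { intros j Hj. apply Hz. lia. }
    2: { intros j Hj. apply Hz1. lia. }
    replace (a + S p)%nat with (S (a + p)) by lia.
    assert (Hw : Csub (z (S (a + p))) C1 <> C0) by (apply Csub_C1_neq0, Hz1; lia).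
    assert (Hv : Csub (z (a + p)%nat) C1 <> C0) by (apply Csub_C1_neq0, Hz1; lia).
    rewrite (Hz (a + p)%nat) in * by lia.
    pose proof (Cpow_neq0 t (S p) Ht).
    unfold mfactor. cbn [Cprod fold_right]. change (Cpow t (S (S p))) with (Cmul t (Cpow t (S p))).
    field. repeat split; auto.
Qed.

Lemma mfactor_square s t : s <> C0 -> t <> C0 -> Cmul t t <> C1 ->
  mfactor s (Cmul t t) = Cdiv (Csub (Cmul s t) (Cinv (Cmul s t))) (Csub t (Cinv t)).
Proof.
  intros Hs Ht Htt.
  pose proof (Csub_Cinv_neq0 t Ht Htt). pose proof (Csub_C1_neq0 _ Htt).
  unfold mfactor. field. repeat split; auto.
Qed.

Lemma tt_neq0 eta : tt eta <> C0.
Proof. apply Cexp_neq0. Qed.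

Lemma tt_sq eta : Cmul (tt eta) (tt eta) = Cexp eta.
Proof.
  unfold tt. rewrite <- Cexp_add. f_equal. destruct eta as [a b].
  unfold Cadd, Cmul, CofR; simpl. apply Cx_ext; field.
Qed.

Lemma qq_Cpow k eta : qq k eta = Cpow (tt eta) k.
Proof.
  unfold qq, hbar, tt. induction k as [|k IH]; simpl Cpow.
  - rewrite <- Cexp_C0. f_equal. destruct eta; unfold Cmul, CofR, C0; simpl; apply Cx_ext; ring.
  - rewrite <- IH, <- Cexp_add. f_equal. destruct eta as [a b].
    rewrite S_INR. unfold Cadd, Cmul, CofR; simpl. apply Cx_ext; ring.
Qed.

Lemma fct_tt_shift a eta : fct (tt eta) a (Cadd a eta) = C0.
Proof.
  assert (HE : Cmul (Cexp (Csub a (Cadd a eta))) (Cexp eta) = C1).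
  { rewrite <- Cexp_add, <- Cexp_C0. f_equal. ring. }
  pose proof (tt_neq0 eta). unfold fct. rewrite <- (tt_sq eta) in HE.
  replace (Cmul (tt eta) (Cexp (Csub a (Cadd a eta))))
    with (Cmul (Cinv (tt eta)) (Cmul (Cexp (Csub a (Cadd a eta))) (Cmul (tt eta) (tt eta))))
    by (field; auto).
  rewrite HE. unfold Cdiv. ring.
Qed.

(** * Blocks and the orthogonal projection onto Vbar *)

Definition block_start (n m k l : nat) : nat := (N1 n m k + k * (l - 1))%nat.
Definition block (n m k l : nat) : list nat := seq (S (block_start n m k l)) k.

Section Blocks.
Variables n m k : nat.
Local Notation start := (block_start n m k).
Local Notation block := (block n m k).

Lemma block_start_sep l l' : (1 <= l)%nat -> (1 <= l')%nat -> l <> l' ->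
  (start l + k <= start l' \/ start l' + k <= start l)%nat.
Proof. intros Hl Hl' Hne. unfold block_start. destruct (Nat.lt_gt_cases l l'); nia. Qed.

Lemma inS0_block l j : (1 <= l <= m)%nat -> (start l < j < start l + k)%nat -> inS0 n m k j.
Proof.
  intros Hl Hj. exists l. split; [exact Hl|]. exists (j - start l)%nat. unfold block_start in *. lia.
Qed.

Lemma inS0_inv j : inS0 n m k j ->
  exists l, (1 <= l <= m)%nat /\ (start l < j < start l + k)%nat.
Proof. intros (l & Hl & j' & Hj' & ->). exists l. unfold block_start. split; [exact Hl | lia]. Qed.

Lemma inblock_iff l j : (1 <= l)%nat ->
  inblock n m k l j = true <-> (start l < j <= start l + k)%nat.
Proof.
  intros Hl. unfold inblock, block_start. rewrite Bool.andb_true_iff, !Nat.leb_le.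
  destruct l as [|l]; [lia|]. rewrite Nat.mul_succ_r. replace (S l - 1)%nat with l by lia. lia.
Qed.

Lemma In_block l j : In j (block l) <-> (start l < j <= start l + k)%nat.
Proof. unfold block. rewrite in_seq. lia. Qed.

Lemma inblock_false l j : (1 <= l)%nat -> ~ (start l < j <= start l + k)%nat ->
  inblock n m k l j = false.
Proof. intros Hl Hj. apply Bool.not_true_iff_false. now rewrite inblock_iff. Qed.

Lemma inblock_S0 l j : (1 <= l)%nat -> inS0 n m k j ->
  inblock n m k l j = inblock n m k l (S j).
Proof.
  intros Hl (l' & Hl' & Hj)%inS0_inv.
  apply Bool.eq_iff_eq_true. rewrite !inblock_iff by lia.
  destruct (Nat.eq_dec l l') as [<-|Hne]; [lia|].
  destruct (block_start_sep l l'); lia.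
Qed.

Lemma inVbar_block_const u l : (1 <= l <= m)%nat -> inVbar n m k u ->
  forall j, In j (block l) -> u j = u (S (start l)).
Proof.
  intros Hl [_ Hu] j Hj. apply In_block in Hj.
  replace j with (S (start l) + (j - S (start l)))%nat by lia.
  assert (Hr : (j - S (start l) < k)%nat) by lia.
  induction (j - S (start l))%nat as [|r IH]; [f_equal; lia|].
  rewrite <- IH by lia. symmetry.
  replace (S (start l) + S r)%nat with (S (S (start l) + r)) by lia.
  apply Hu, (inS0_block l); [exact Hl | lia].
Qed.

Hypothesis mk_le : (m * k <= S n)%nat.

Lemma block_start_bounds l : (1 <= l <= m)%nat ->
  (N1 n m k <= start l)%nat /\ (start l + k = N1 n m k + k * l)%nat /\ (start l + k <= S n)%nat.
Proof. intros Hl. unfold block_start, N1. destruct l as [|l]; [lia|]. nia. Qed.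

Lemma rng_split : rng 1 (S n) = seq 1 (N1 n m k) ++ flat_map block (seq 1 m).
Proof.
  unfold rng. replace (S (S n) - 1)%nat with (N1 n m k + m * k)%nat by (unfold N1; lia).
  rewrite seq_app, (seq_blocks k m (1 + N1 n m k) 1). reflexivity.
Qed.

Lemma inS0_range j : inS0 n m k j -> (N1 n m k < j)%nat /\ (S j <= S n)%nat.
Proof.
  intros (l & Hl & Hj)%inS0_inv. pose proof (block_start_bounds l Hl). lia.
Qed.

Lemma Rsum_inblock l f : (1 <= l <= m)%nat ->
  Rsum (rng 1 (S n)) (fun j => (if inblock n m k l j then 1 else 0) * f j) = Rsum (block l) f.
Proof.
  intros Hl. destruct (block_start_bounds l Hl) as (_ & _ & Hb).
  unfold rng. replace (S (S n) - 1)%nat with (start l + (k + (S n - start l - k)))%nat by lia.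
  rewrite !seq_app, !Rsum_app.
  rewrite (Rsum_ext (seq 1 _) _ (fun _ => 0)), (Rsum_ext (seq (1 + start l + k) _) _ (fun _ => 0)),
    (Rsum_ext (seq (1 + start l) k) _ f), !Rsum_const; [unfold block; simpl; ring | ..];
    intros j Hj; apply in_seq in Hj.
  - rewrite (proj2 (inblock_iff l j ltac:(lia))) by lia. ring.
  - rewrite inblock_false by lia. ring.
  - rewrite inblock_false by lia. ring.
Qed.

Lemma is_orth_proj_iff_veq v w0 w : is_orth_proj n (inVbar n m k) v w0 ->
  is_orth_proj n (inVbar n m k) v w <-> veq n w0 w.
Proof.
  intros [[HV0 HC0] HO0]. split.
  - intros [[HV HC] HO].
    set (u := fun i => w0 i - w i).
    assert (Hu : inVbar n m k u).
    { split.
      - unfold inV in *. rewrite sumR_Rsum in *. unfold u. rewrite Rsum_minus, HV0, HV. ring.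
      - intros j Hj. unfold u. now rewrite HC0, HC. }
    assert (Huu : Rsum (rng 1 (S n)) (fun i => u i * u i) = 0).
    { pose proof (HO0 u Hu) as E0. pose proof (HO u Hu) as E1. unfold dot in E0, E1.
      rewrite sumR_Rsum in E0, E1.
      rewrite <- (Rminus_diag_eq _ _ (eq_trans E1 (eq_sym E0))), <- Rsum_minus.
      apply Rsum_ext. intros; unfold u; ring. }
    intros i Hi.
    assert (u i * u i = 0).
    { apply (Rsum_eq0_nonneg _ _ (fun i _ => Rle_0_sqr (u i)) Huu). apply in_seq. lia. }
    unfold u in *. nra.
  - intros Hw. assert (Hin : forall i, In i (rng 1 (S n)) -> (1 <= i <= S n)%nat).
    { intros i Hi. apply in_seq in Hi. lia. }
    split; [split|].
    + unfold inV in *. rewrite sumR_Rsum in *. rewrite <- HV0. apply Rsum_ext.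
      intros i Hi. symmetry. now apply Hw, Hin.
    + intros j Hj. destruct (inS0_range j Hj). rewrite <- !Hw by lia. now apply HC0.
    + intros u Hu. rewrite <- (HO0 u Hu). unfold dot. rewrite !sumR_Rsum. apply Rsum_ext.
      intros i Hi. now rewrite Hw by (now apply Hin).
Qed.

Lemma orth_proj_lamx_free i : (1 <= i <= N1 n m k)%nat ->
  is_orth_proj n (inVbar n m k) (lamx n i) (lamx n i).
Proof.
  intros Hi. split; [split|].
  - unfold inV. rewrite sumR_Rsum.
    rewrite (Rsum_ext _ _ (fun j => / INR (S n) - (if Nat.eqb j i then 1 else 0) * 1))
      by (intros; unfold lamx, ehat; ring).
    rewrite Rsum_minus, Rsum_const, Rsum_delta, length_rng; [| |apply rng_NoDup].
    + field. apply not_0_INR. lia.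
    + apply in_seq. unfold N1 in Hi. lia.
  - intros j Hj. destruct (inS0_range j Hj).
    unfold lamx, ehat. destruct (Nat.eqb_spec j i), (Nat.eqb_spec (S j) i); lia || reflexivity.
  - intros u _. unfold dot. rewrite sumR_Rsum.
    rewrite (Rsum_ext _ _ (fun _ => 0)) by (intros; ring). rewrite Rsum_const; ring.
Qed.

Lemma orth_proj_lamx_block l i : (1 <= l <= m)%nat -> In i (block l) ->
  is_orth_proj n (inVbar n m k) (lamx n i) (lamy n m k l).
Proof.
  intros Hl Hi. assert (Hk : INR k <> 0) by (apply not_0_INR; apply In_block in Hi; lia).
  assert (Hlen : length (block l) = k) by apply length_seq.
  split; [split|].
  - unfold inV. rewrite sumR_Rsum.
    rewrite (Rsum_ext _ _ (fun j => - / INR k * ((if inblock n m k l j then 1 else 0) * 1)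
                                    + / INR (S n))) by (intros; unfold lamy; ring).
    rewrite Rsum_plus, Rsum_scal, Rsum_inblock, !Rsum_const, (length_rng (S n)), Hlen by exact Hl.
    field. split; [apply not_0_INR; lia | exact Hk].
  - intros j Hj. unfold lamy. now rewrite (inblock_S0 l j).
  - intros u Hu. unfold dot. rewrite sumR_Rsum.
    rewrite (Rsum_ext _ _ (fun j => / INR k * ((if inblock n m k l j then 1 else 0) * u j)
                                    - (if Nat.eqb j i then 1 else 0) * u j))
      by (intros; unfold lamy, lamx, ehat; ring).
    assert (Hi' : In i (rng 1 (S n))).
    { pose proof (block_start_bounds l Hl). apply In_block in Hi. apply in_seq. lia. }
    rewrite Rsum_minus, Rsum_scal, (Rsum_inblock l u Hl), (Rsum_delta _ i u Hi' (rng_NoDup 1 (S n))).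
    rewrite (Rsum_ext _ _ (fun _ => u i)), Rsum_const, Hlen.
    + field. exact Hk.
    + intros j Hj. rewrite (inVbar_block_const u l Hl Hu j Hj).
      symmetry. exact (inVbar_block_const u l Hl Hu i Hi).
Qed.
End Blocks.

(** * Coefficients of M at a point of D0 *)

Section PointOfD0.
Variables (n m k : nat) (eta : Cx) (x : nat -> Cx).
Hypothesis mk_le : (m * k <= S n)%nat.
Hypothesis x_D0 : inD0 n m k eta x.

Local Notation start := (block_start n m k).
Local Notation block := (block n m k).
Local Notation last l := (N1 n m k + k * l)%nat.

Lemma D0_block_step l j : (1 <= l <= m)%nat -> (start l < j < start l + k)%nat ->
  x j = Cadd (x (S j)) eta.
Proof.
  intros Hl Hj. destruct x_D0 as [_ Hstep].
  rewrite <- (Hstep j (inS0_block n m k l j Hl Hj)). ring.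
Qed.

Lemma ycoord_D0 l : (1 <= k)%nat -> (1 <= l <= m)%nat -> ycoord n m k eta x l = x (last l).
Proof.
  intros Hk Hl. destruct (block_start_bounds n m k mk_le l Hl) as (_ & Hlast & _).
  assert (Hs : forall s, (s < k)%nat ->
            x (last l - s)%nat = Cadd (x (last l)) (Cmul (CofR (INR s)) eta)).
  { induction s as [|s IH]; intros Hs.
    - rewrite Nat.sub_0_r. destruct (x (last l)), eta; unfold Cadd, Cmul, CofR; simpl.
      apply Cx_ext; ring.
    - rewrite (D0_block_step l) by (exact Hl || lia).
      replace (S (last l - S s)) with (last l - s)%nat by lia.
      rewrite IH, S_INR by lia. destruct (x (last l)), eta; unfold Cadd, Cmul, CofR; simpl.
      apply Cx_ext; ring. }
  unfold ycoord. rewrite sumC_Csum. unfold rng. replace (S (k - 1) - 0)%nat with k by lia.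
  rewrite (Csum_ext _ _ (fun s => Cadd (x (last l)) (Cmul (CofR (INR s)) eta))), Csum_arith.
  - assert (INR k <> 0) by (apply not_0_INR; lia).
    destruct (x (last l)), eta; unfold Csub, Cadd, Copp, Cmul, CofR; simpl; apply Cx_ext; field; auto.
  - intros s Hs'. apply in_seq in Hs'. apply Hs. lia.
Qed.

Hypothesis k_ge2 : (2 <= k)%nat.
Hypothesis x_generic : generic n x.

Lemma Cexp_block_step l j c : (1 <= l <= m)%nat -> (start l < j < start l + k)%nat ->
  Cexp (Csub (x j) c) = Cmul (Cmul (tt eta) (tt eta)) (Cexp (Csub (x (S j)) c)).
Proof.
  intros Hl Hj. rewrite (D0_block_step l j Hl Hj), tt_sq, <- Cexp_add. f_equal. ring.
Qed.

Lemma Cprod_block_fct l c : (1 <= l <= m)%nat ->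
  (forall j, In j (block l) -> Cexp (Csub (x j) c) <> C1) ->
  Cprod (block l) (fun j => fct (tt eta) (x j) c) = fct (qq k eta) (x (last l)) c.
Proof.
  intros Hl Hc. destruct (block_start_bounds n m k mk_le l Hl) as (_ & Hlast & _).
  unfold block. replace (seq _ k) with (seq (S (start l)) (S (k - 1))) by (f_equal; lia).
  rewrite qq_Cpow, fct_mfactor.
  rewrite (mfactor_telescope (tt eta) (fun j => Cexp (Csub (x j) c))).
  - replace (S (k - 1)) with k by lia.
    replace (S (start l) + (k - 1))%nat with (last l) by lia. reflexivity.
  - apply tt_neq0.
  - intros j Hj. apply (Cexp_block_step l); [exact Hl | lia].
  - intros j Hj. apply Hc, In_block. lia.
Qed.

Lemma Cprod_block_at_last l : (1 <= l <= m)%nat ->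
  Cprod (block l) (fun j => if Nat.eqb j (last l) then C1 else fct (tt eta) (x j) (x (last l))) =
  Cdiv (Csub (qq k eta) (Cinv (qq k eta))) (Csub (tt eta) (Cinv (tt eta))).
Proof.
  intros Hl. destruct (block_start_bounds n m k mk_le l Hl) as (_ & Hlast & Hle).
  unfold block. set (a := S (start l)).
  replace (seq a k) with (seq a (S (S (k - 2)))) by (f_equal; lia).
  rewrite seq_S, Cprod_app. cbn [Cprod fold_right].
  replace (a + S (k - 2))%nat with (last l) by (unfold a; lia). rewrite Nat.eqb_refl.
  rewrite (Cprod_ext _ _ (fun j => mfactor (tt eta) (Cexp (Csub (x j) (x (last l)))))).
  2: { intros j Hj. apply in_seq in Hj. destruct (Nat.eqb_spec j (last l)); [lia | reflexivity]. }
  assert (Htt : Cexp (Csub (x (a + (k - 2))%nat) (x (last l))) = Cmul (tt eta) (tt eta)).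
  { rewrite (Cexp_block_step l (a + (k - 2)) (x (last l)) Hl ltac:(unfold a; lia)).
    replace (S (a + (k - 2))) with (last l) by (unfold a; lia).
    replace (Csub (x (last l)) (x (last l))) with C0 by ring. rewrite Cexp_C0. ring. }
  assert (Htt1 : Cmul (tt eta) (tt eta) <> C1) by (rewrite <- Htt; apply x_generic; unfold a; lia).
  pose proof (tt_neq0 eta) as Ht.
  rewrite (mfactor_telescope (tt eta) (fun j => Cexp (Csub (x j) (x (last l))))), Htt.
  - pose proof (Cpow_neq0 (tt eta) (S (k - 2)) Ht).
    rewrite mfactor_square, qq_Cpow by auto.
    replace (Cpow (tt eta) k) with (Cpow (tt eta) (S (S (k - 2)))) by (f_equal; lia).
    pose proof (Csub_Cinv_neq0 _ Ht Htt1). simpl Cpow in *. field.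
    repeat split; [exact Ht | apply Cpow_neq0, Ht | apply Csub_C1_neq0, Htt1].
  - exact Ht.
  - intros j Hj. apply (Cexp_block_step l); [exact Hl | unfold a in *; lia].
  - intros j Hj. apply x_generic; unfold a in *; lia.
Qed.

Lemma Mcoef_blocks i : Mcoef n eta i x =
  Cmul (Cprod (seq 1 (N1 n m k)) (fun j => if Nat.eqb j i then C1 else fct (tt eta) (x j) (x i)))
       (Cprod (seq 1 m) (fun l =>
          Cprod (block l) (fun j => if Nat.eqb j i then C1 else fct (tt eta) (x j) (x i)))).
Proof.
  unfold Mcoef. now rewrite prodC_Cprod, (rng_split n m k mk_le), Cprod_app, Cprod_flat_map.
Qed.

Lemma Cprod_block_outside l c : (1 <= l <= m)%nat -> (1 <= c <= S n)%nat -> ~ In c (block l) ->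
  Cprod (block l) (fun j => if Nat.eqb j c then C1 else fct (tt eta) (x j) (x c)) =
  fct (qq k eta) (ycoord n m k eta x l) (x c).
Proof.
  intros Hl Hc Hout. destruct (block_start_bounds n m k mk_le l Hl) as (_ & _ & Hle).
  rewrite (ycoord_D0 l) by (lia || exact Hl).
  rewrite (Cprod_ext _ _ (fun j => fct (tt eta) (x j) (x c))).
  - apply (Cprod_block_fct l _ Hl). intros j Hj.
    apply x_generic; [lia | apply In_block in Hj; lia | congruence].
  - intros j Hj. destruct (Nat.eqb_spec j c); [congruence | reflexivity].
Qed.

Lemma Mcoef_free i : (1 <= i <= N1 n m k)%nat -> Mcoef n eta i x = Mbx n m k eta i x.
Proof.
  intros Hi. rewrite Mcoef_blocks. unfold Mbx, N2. rewrite !prodC_Cprod, !rng_1. f_equal.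
  apply Cprod_ext. intros l Hl. apply in_seq in Hl. assert (Hl' : (1 <= l <= m)%nat) by lia.
  destruct (block_start_bounds n m k mk_le l Hl') as (Hfree & _ & _).
  apply Cprod_block_outside; [exact Hl' | unfold N1 in Hi; lia | rewrite In_block; lia].
Qed.

Lemma Mcoef_block_inner l i : (1 <= l <= m)%nat -> (start l < i < start l + k)%nat ->
  Mcoef n eta i x = C0.
Proof.
  intros Hl Hi. destruct (block_start_bounds n m k mk_le l Hl) as (_ & _ & Hle).
  unfold Mcoef. rewrite prodC_Cprod. apply (Cprod_eq0 _ _ (S i)).
  - apply in_seq. lia.
  - destruct (Nat.eqb_spec (S i) i); [lia|].
    rewrite (D0_block_step l i Hl Hi). apply fct_tt_shift.
Qed.

Lemma Mcoef_block_last l : (1 <= l <= m)%nat -> Mcoef n eta (last l) x = Mby n m k eta l x.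
Proof.
  intros Hl. destruct (block_start_bounds n m k mk_le l Hl) as (Hfree & Hlast & Hle).
  rewrite Mcoef_blocks. unfold Mby, N2. rewrite !prodC_Cprod, !rng_1, (ycoord_D0 l) by (lia || exact Hl).
  rewrite (Cprod_ext (seq 1 (N1 n m k)) _ (fun j => fct (tt eta) (x j) (x (last l)))).
  2: { intros j Hj. apply in_seq in Hj. destruct (Nat.eqb_spec j (last l)); [lia | reflexivity]. }
  rewrite (Cprod_ext (seq 1 m) _ (fun l' => if Nat.eqb l' l then
              Cdiv (Csub (qq k eta) (Cinv (qq k eta))) (Csub (tt eta) (Cinv (tt eta)))
            else fct (qq k eta) (ycoord n m k eta x l') (x (last l)))).
  - rewrite Cprod_pull; [ring | apply in_seq; lia | apply seq_NoDup].
  - intros l' Hl'. apply in_seq in Hl'. assert (Hl'' : (1 <= l' <= m)%nat) by lia.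
    destruct (Nat.eqb_spec l' l) as [->|Hne]; [exact (Cprod_block_at_last l Hl)|].
    apply Cprod_block_outside; [exact Hl'' | lia | rewrite In_block].
    destruct (block_start_sep n m k l l'); lia.
Qed.

Lemma Csum_block_Mcoef l : (1 <= l <= m)%nat ->
  Csum (block l) (fun i => Mcoef n eta i x) = Mby n m k eta l x.
Proof.
  intros Hl. destruct (block_start_bounds n m k mk_le l Hl) as (_ & Hlast & _).
  unfold block. replace (seq _ k) with (seq (S (start l)) (S (k - 1))) by (f_equal; lia).
  rewrite seq_S, Csum_app, (Csum_ext _ _ (fun _ => C0)), Csum_C0.
  - replace (S (start l) + (k - 1))%nat with (last l) by lia.
    cbn [Csum fold_right]. rewrite Mcoef_block_last by exact Hl. ring.
  - intros i Hi. apply in_seq in Hi. apply (Mcoef_block_inner l i Hl). lia.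
Qed.
End PointOfD0.

Lemma dec_iff (P Q : Prop) : (P <-> Q) -> dec P = dec Q.
Proof.
  intro H; unfold dec.
  destruct (excluded_middle_informative P), (excluded_middle_informative Q); tauto.
Qed.

Lemma rcoef_map n m k (lv : nat -> vec) (cf : nat -> coefT) L lam' x :
  rcoef n m k (map (fun i => (lv i, cf i)) L) lam' x =
  Csum L (fun i => if dec (is_orth_proj n (inVbar n m k) (lv i) lam') then cf i x else C0).
Proof. induction L as [|i L IH]; [reflexivity|]. unfold rcoef in *; simpl. now rewrite IH. Qed.

Lemma coef_map n (lv : nat -> vec) (cf : nat -> coefT) L lam' x :
  coef n (map (fun i => (lv i, cf i)) L) lam' x =
  Csum L (fun i => if dec (veq n (lv i) lam') then cf i x else C0).
Proof. induction L as [|i L IH]; [reflexivity|]. unfold coef in *; simpl. now rewrite IH. Qed.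

Lemma coef_app n D1 D2 lam' x :
  coef n (D1 ++ D2) lam' x = Cadd (coef n D1 lam' x) (coef n D2 lam' x).
Proof.
  induction D1 as [|e D1 IH]; unfold coef in *; simpl; [ring | rewrite IH; ring].
Qed.

Theorem mainTheorem14 (n m k : nat) (eta : Cx) :
  (2 <= k)%nat -> (1 <= m)%nat -> (m * k <= S n)%nat ->
  not_in_piiQ (hbar k eta) ->
  forall (lam' : vec) (x : nat -> Cx),
    inD0 n m k eta x -> generic n x ->
    rcoef n m k (Mop n eta) lam' x = coef n (Mbar n m k eta) lam' x.
Proof.
  (* [generic] already keeps every denominator away from 0, so hbar need not avoid pi i Q. *)
  intros Hk _ Hmk _ lam' x HD HG.
  unfold Mop, Mbar. rewrite rcoef_map, coef_app, !coef_map, (rng_split n m k Hmk), Csum_app,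
    Csum_flat_map, !rng_1. unfold N2. f_equal.
  - apply Csum_ext. intros i Hi. apply in_seq in Hi. assert (Hi' : (1 <= i <= N1 n m k)%nat) by lia.
    rewrite (Mcoef_free n m k eta x Hmk HD Hk HG i Hi').
    rewrite (dec_iff _ (veq n (lamx n i) lam')); [reflexivity|].
    apply (is_orth_proj_iff_veq n m k Hmk), (orth_proj_lamx_free n m k Hmk i Hi').
  - apply Csum_ext. intros l Hl. apply in_seq in Hl. assert (Hl' : (1 <= l <= m)%nat) by lia.
    rewrite (Csum_ext _ _ (fun i => if dec (veq n (lamy n m k l) lam') then Mcoef n eta i x else C0)).
    + destruct (dec _); [exact (Csum_block_Mcoef n m k eta x Hmk HD Hk HG l Hl') | apply Csum_C0].
    + intros i Hi. rewrite (dec_iff _ (veq n (lamy n m k l) lam')); [reflexivity|].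
      apply (is_orth_proj_iff_veq n m k Hmk), (orth_proj_lamx_block n m k Hmk l i Hl' Hi).
Qed.
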